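(* Let $G=(V,E)$ be a strongly connected digraph and $s\in V$. Let $e=(u,v)\in E$ with $T(u)\neq T(v)$, and let $r_v$ be the root of $T(v)$. Then either $u=d(v)$ and $e$ is a bridge of $G(s)$, or $u$ is a proper descendant of $r_v$ in $D(s)$.
   Context: For a digraph $G=(V,E)$ and $s\in V$ with every vertex reachable from $s$, $G(s)$ is the flow graph with start vertex $s$; $u$ dominates $w$ if every path from $s$ to $w$ contains $u$; the dominator tree $D(s)$ is the rooted tree on $V$ with root $s$ in which $u$ is an ancestor of $w$ iff $u$ dominates $w$; $d(w)$ is the parent of $w\neq s$. An edge $(u,w)$ is a bridge of $G(s)$ if every path from $s$ to $w$ contains it (then $u=d(w)$). A vertex $w\neq s$ is marked if $(d(w),w)$ is a bridge of $G(s)$. Deleting from $D(s)$ all edges $(d(w),w)$ with $w$ marked decomposes $D(s)$ into a forest of subtrees, each rooted at $s$ or at a marked vertex; $T(v)$ denotes the subtree containing $v$, and $r_v$ its root. *)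

From mathcomp Require Import all_boot.
Set Implicit Arguments. Unset Strict Implicit. Unset Printing Implicit Defensive.

Section Dom.
Variables (V : finType) (E : rel V) (s : V).

Definition spath (p : seq V) (w : V) : Prop := path E s p /\ last s p = w.

Definition dominates (u w : V) : Prop :=
  forall p, spath p w -> u \in s :: p.

Definition path_edges (p : seq V) : seq (V * V) := zip (s :: p) p.

Definition bridge (u w : V) : Prop :=
  E u w /\ forall p, spath p w -> (u, w) \in path_edges p.

(* d w = x: x is the parent of w <> s in the dominator tree D(s),
   i.e. the immediate dominator of w. *)
Definition idom (x w : V) : Prop :=
  w <> s /\ dominates x w /\ x <> w /\
  forall y, dominates y w -> y <> w -> dominates y x.

Definition marked (w : V) : Prop :=
  w <> s /\ exists x, idom x w /\ bridge x w.

(* r is the root r_v of the subtree T(v): r is an ancestor of v in D(s)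
   (i.e. r dominates v), r is s or marked, and no marked vertex lies on
   the D(s)-path strictly between r and v (every marked ancestor of v is
   an ancestor of r). *)
Definition tree_root (v r : V) : Prop :=
  dominates r v /\ (r = s \/ marked r) /\
  forall x, marked x -> dominates x v -> dominates x r.

End Dom.

(* If r_v does not dominate u, some path from s to u avoids r_v; extending it by
   the edge (u,v) gives a path to v, which must pass through the dominator r_v,
   so r_v = v.  Then v <> s, so v is marked, and the bridge (d(v),v) lies on
   this path; as v does not occur before its last vertex, d(v) = u.  Finally
   u = r_v is impossible, since a root of a subtree is the root of its own
   subtree, which would give r_u = r_v. *)

From Stdlib Require Import Classical.
From mathcomp Require Import all_boot.

Set Implicit Arguments.
Unset Strict Implicit.
Unset Printing Implicit Defensive.

Lemma zip_rcons_edge_last (T : eqType) (a x v : T) (p : seq T) :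
  v \notin p -> (x, v) \in zip (a :: rcons p v) (rcons p v) -> x = last a p.
Proof.
elim: p a => [|b p IHp] a /=; first by rewrite inE => _ /eqP [].
rewrite !in_cons negb_or => /andP [vNb vNp] /orP [/eqP [_ vb]|]; last exact: IHp.
by rewrite vb eqxx in vNb.
Qed.

Section Dominators.
Variables (V : finType) (E : rel V) (s : V).

Lemma spath_rcons p u v : spath E s p u -> E u v -> spath E s (rcons p v) v.
Proof. by case=> Ep lastp Euv; rewrite /spath rcons_path Ep lastp Euv last_rcons. Qed.

Lemma dominates_refl w : dominates E s w w.
Proof. by move=> p [_ <-]; apply: mem_last. Qed.

Lemma dominates_start y : dominates E s y s -> y = s.
Proof. by move/(_ [::] (conj isT erefl)); rewrite inE => /eqP. Qed.

Lemma not_dominates_path y w :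
  ~ dominates E s y w -> exists p, spath E s p w /\ y \notin s :: p.
Proof.
move=> Ndom; apply: NNPP => Nex; apply: Ndom => p spw.
by apply/negPn/negP => yNp; apply: Nex; exists p.
Qed.

(* A shortest path from s to a passes through b; cutting it at b gives a path
   to b avoiding a, unless a = b. *)
Lemma dominates_antisym a b :
  connect E s a -> dominates E s a b -> dominates E s b a -> a = b.
Proof.
move=> /connectP [p0 Ep0 lastp0] dom_ab dom_ba.
case: (shortenP Ep0) lastp0 => p Ep uniqp _ lastp.
have /dom_ba := conj Ep (esym lastp).
rewrite in_cons => /orP [/eqP bs|].
  by move: dom_ab; rewrite bs => /dominates_start.
move=> bp; case/splitPr: bp Ep uniqp lastp => p1 p2.
rewrite cat_path -cat_cons cat_uniq => /andP [Ep1 /andP [Eb _]] /and3P [_ disj _].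
rewrite last_cat /= => lastp.
have /dom_ab : spath E s (rcons p1 b) b.
  by rewrite /spath rcons_path Ep1 Eb last_rcons.
rewrite -rcons_cons mem_rcons in_cons => /orP [/eqP // | ap1].
by case/hasP: disj; exists a; rewrite // lastp mem_last.
Qed.

Lemma tree_root_of_root u ru :
  connect E s ru -> tree_root E s u ru -> u = s \/ marked E s u -> ru = u.
Proof.
move=> s_ru [dom_ru_u [_ maxr]] [us | mu].
  by move: dom_ru_u; rewrite us => /dominates_start.
exact: dominates_antisym s_ru dom_ru_u (maxr u mu (@dominates_refl u)).
Qed.

End Dominators.

Theorem mainTheorem6 (V : finType) (E : rel V) (s : V)
  (Hsc : forall x y : V, connect E x y)
  (u v : V) (He : E u v) (ru rv : V)
  (Hru : tree_root E s u ru) (Hrv : tree_root E s v rv)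
  (Hneq : ru <> rv) :
  (idom E s u v /\ bridge E s u v) \/
  (dominates E s rv u /\ u <> rv).
Proof.
case: Hrv => dom_rv_v [root_rv _].
have u_neq_rv : u <> rv.
  move=> urv; apply: Hneq; rewrite urv in Hru root_rv *.
  exact: tree_root_of_root (Hsc s ru) Hru root_rv.
have [dom_rv_u | /not_dominates_path [p [spu rvNp]]] := classic (dominates E s rv u).
  by right.
have spv := spath_rcons spu He.
have rv_v : rv = v.
  move: (dom_rv_v _ spv) rvNp.
  by rewrite -rcons_cons mem_rcons in_cons => /orP [/eqP | ->].
subst rv; left.
case: root_rv => [vs | [_ [x [idom_xv bridge_xv]]]].
  by rewrite vs mem_head in rvNp.
have vNp : v \notin p by apply: contra rvNp; rewrite in_cons orbC => ->.
have := zip_rcons_edge_last vNp (bridge_xv.2 _ spv).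
by case: spu => _ -> <-.
Qed.
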